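(* Let $m\ge d\ge1$, $\lambda=d/m$, and let $\mathcal L=\sum_ic_i(\partial_x\partial_y)^i$ be a linear differential operator with constant coefficients $c_i$. For bivariate polynomials $p(x,y)=y^{m-d}f(xy)$ and $q(x,y)=y^{m-d}g(xy)$ with $f,g$ of degree at most $d$, \[ \mathcal L\{p\boxplus_{d,\lambda}q\}=\mathcal L\{p\}\boxplus_{d,\lambda}q=p\boxplus_{d,\lambda}\mathcal L\{q\}. \]
   Context: For $f=\sum_{i=0}^d(-1)^ia_ix^{d-i}$, $g=\sum_{i=0}^d(-1)^ib_ix^{d-i}$ (degree at most $d$): $(f\boxplus_{d,\lambda}g)(x)=\sum_{k=0}^dx^{d-k}(-1)^k\sum_{i+j=k}\frac{(d-i)!(d-j)!}{d!(d-k)!}\frac{(m-i)!(m-j)!}{m!(m-k)!}a_ib_j$, and for $p=y^{m-d}f(xy)$, $q=y^{m-d}g(xy)$, $p\boxplus_{d,\lambda}q:=y^{m-d}(f\boxplus_{d,\lambda}g)(xy)$. Note $(\partial_x\partial_y)$ maps the space $\{y^{m-d}h(xy):\deg h\le d\}$ into itself. *)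

(* Bivariate polynomials in x,y are {poly {poly R}}:
   the inner variable is x, the outer variable ('X at the outer level) is y. *)
From HB Require Import structures.
From mathcomp Require Import all_boot all_order all_algebra.
Set Implicit Arguments. Unset Strict Implicit. Unset Printing Implicit Defensive.
Import Order.TTheory GRing.Theory Num.Theory.
Local Open Scope ring_scope.

Section Defs.
Variable R : numFieldType.

Definition bweight (d m i j k : nat) : R :=
  (((d - i)`! * (d - j)`!)%:R / ((d`! * (d - k)`!)%:R)) *
  (((m - i)`! * (m - j)`!)%:R / ((m`! * (m - k)`!)%:R)).

(* a_i such that f = \sum_i (-1)^i a_i x^(d-i) *)
Definition scoef (d : nat) (f : {poly R}) (i : nat) : R := (-1) ^+ i * f`_(d - i).

Definition boxplus (d m : nat) (f g : {poly R}) : {poly R} :=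
  \sum_(k < d.+1)
    ((-1) ^+ k * \sum_(i < k.+1)
        bweight d m i (k - i) k * scoef d f i * scoef d g (k - i)) *: 'X^(d - k).

(* y^(m-d) f(xy) as a bivariate polynomial *)
Definition embed (d m : nat) (f : {poly R}) : {poly {poly R}} :=
  \sum_(i < d.+1) (f`_i *: 'X^i)%:P * 'X^(i + (m - d)).

(* recovers h from y^(m-d) h(xy) (coefficient of x^i y^(i+m-d)) *)
Definition unembed (d m : nat) (P : {poly {poly R}}) : {poly R} :=
  \poly_(i < d.+1) (P`_(i + (m - d)))`_i.

Definition boxplus2 (d m : nat) (p q : {poly {poly R}}) : {poly {poly R}} :=
  embed d m (boxplus d m (unembed d m p) (unembed d m q)).

Definition Dx (P : {poly {poly R}}) : {poly {poly R}} := map_poly (@deriv R) P.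
Definition Dy (P : {poly {poly R}}) : {poly {poly R}} := deriv P.
Definition Dxy (P : {poly {poly R}}) : {poly {poly R}} := Dx (Dy P).

Definition Lop (c : seq R) (P : {poly {poly R}}) : {poly {poly R}} :=
  \sum_(i < size c) (c`_i)%:P%:P * iter i Dxy P.

End Defs.

(* Under h |-> y^(m-d) h(xy), the operator d_x d_y becomes an operator D on
   univariate polynomials, so it suffices to show D (f [+] g) = D f [+] g;
   linearity and commutativity of [+] then give the statement for L on either
   side.  On signed coefficients D is a weighted shift,
   a_(i+1)(D f) = -(d-i)(m-i) a_i(f), and the weights w of [+] satisfy
   w(i+1, k-i, k+1) (d-i)(m-i) = w(i, k-i, k) (d-k)(m-k); hence the (k+1)-th
   coefficient of D f [+] g is -(d-k)(m-k) times the k-th one of f [+] g,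
   which is also the (k+1)-th coefficient of D (f [+] g). *)

From HB Require Import structures.
From mathcomp Require Import all_boot all_order all_algebra.
From mathcomp Require Import zify ring.
Set Implicit Arguments. Unset Strict Implicit. Unset Printing Implicit Defensive.
Import Order.TTheory GRing.Theory Num.Theory.
Local Open Scope ring_scope.

Section BoxplusDerivative.
Variable R : numFieldType.
Variables d m : nat.
Implicit Types (f g h : {poly R}) (c : seq R).

Lemma coef_embed h n j :
  ((embed d m h)`_n)`_j = if (n == j + (m - d))%N && (j <= d)%N then h`_j else 0.
Proof.
rewrite /embed !coef_sum.
under eq_bigr => i _ do rewrite coefCM coefXn mulr_natr coefMn coefZ coefXn.
rewrite (eq_bigr (fun i : 'I_d.+1 =>
  if (i : nat) == j then h`_j *+ (n == j + (m - d))%N else 0)); last first.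
  by move=> i _; case: (eqVneq (i : nat) j) => [<-|_]; rewrite ?mulr1 // mulr0 mul0rn.
rewrite -big_mkcond (big_ord1_eq _ (fun _ => h`_j *+ (n == j + (m - d))%N)).
by rewrite ltnS andbC; case: (j <= d)%N; case: (n == _).
Qed.

Lemma unembed_embed h j : (j <= d)%N -> (unembed d m (embed d m h))`_j = h`_j.
Proof. by move=> le_jd; rewrite coef_poly ltnS le_jd coef_embed eqxx le_jd. Qed.

Lemma coef_Dxy (P : {poly {poly R}}) n j :
  ((Dxy P)`_n)`_j = (P`_n.+1)`_j.+1 *+ n.+1 *+ j.+1.
Proof. by rewrite coef_map_id0 ?deriv0 // !coef_deriv coefMn. Qed.

(* [Dxy] maps x^i y^(i + m - d) to i (i + m - d) x^(i - 1) y^(i - 1 + m - d);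
   [Dxy_univ] is its action on h in y^(m - d) h(xy). *)
Definition Dxy_univ h : {poly R} :=
  \poly_(i < d) ((i.+1 * (i.+1 + (m - d)))%:R * h`_i.+1).

Definition Lop_univ c h : {poly R} := \sum_(i < size c) c`_i *: iter i Dxy_univ h.

Lemma Dxy_embed h : Dxy (embed d m h) = embed d m (Dxy_univ h).
Proof.
apply/polyP => n; apply/polyP => j.
rewrite coef_Dxy !coef_embed coef_poly addSn eqSS.
case: eqP => [->|_] /=; last by rewrite !mul0rn.
case: ltnP => [lt_jd|le_dj]; last by rewrite !mul0rn; case: ifP.
by rewrite (ltnW lt_jd) -mulrnA mulr_natl mulnC.
Qed.

Lemma Lop_embed c h : Lop c (embed d m h) = embed d m (Lop_univ c h).
Proof.
have iter_Dxy_embed i : iter i (@Dxy R) (embed d m h) = embed d m (iter i Dxy_univ h).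
  by elim: i => //= i ->; rewrite Dxy_embed.
apply/polyP => n; apply/polyP => j.
rewrite /Lop /Lop_univ coef_sum coef_sum coef_embed coef_sum.
under eq_bigr => i _ do rewrite !coefCM iter_Dxy_embed coef_embed.
case: ifP => _; first by apply: eq_bigr => i _; rewrite coefZ.
by rewrite big1 // => i _; rewrite mulr0.
Qed.

Lemma boxplus2_embed f g :
  boxplus2 d m (embed d m f) (embed d m g) = embed d m (boxplus d m f g).
Proof.
rewrite /boxplus2 /boxplus; congr embed; apply: eq_bigr => k _.
by congr (_ * _ *: _); apply: eq_bigr => i _; rewrite /scoef !unembed_embed ?leq_subr.
Qed.

Definition boxplus_coef f g k : R :=
  \sum_(i < k.+1) bweight R d m i (k - i) k * scoef d f i * scoef d g (k - i).

Lemma coef_boxplus f g n :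
  (boxplus d m f g)`_n = if (n <= d)%N then (-1) ^+ (d - n) * boxplus_coef f g (d - n) else 0.
Proof.
rewrite /boxplus coef_sum.
under eq_bigr => k _ do rewrite coefZ coefXn.
case: leqP => [le_nd|lt_dn].
  rewrite (bigD1 (@Ordinal d.+1 (d - n) (leq_subr n d))) //= (subKn le_nd) eqxx mulr1n mulr1.
  rewrite [X in _ + X]big1 ?addr0 // => k; rewrite -val_eqE /= => ne.
  case: eqP => [e|_]; last by rewrite mulr0.
  exfalso; move/eqP: ne; apply; have := ltn_ord k; lia.
rewrite big1 // => k _; suff /negbTE -> : n != (d - k)%N by rewrite mulr0.
by rewrite neq_ltn (leq_ltn_trans (leq_subr k d) lt_dn) orbT.
Qed.

Lemma bweightC i j k : bweight R d m i j k = bweight R d m j i k.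
Proof. by rewrite /bweight (mulnC (d - i)`!) (mulnC (m - i)`!). Qed.

Lemma boxplus_coefC f g k : boxplus_coef f g k = boxplus_coef g f k.
Proof.
rewrite /boxplus_coef (reindex_inj rev_ord_inj) /=; apply: eq_bigr => i _.
have le_ik : (i <= k)%N by rewrite -ltnS.
by rewrite subSS (subKn le_ik) bweightC mulrAC.
Qed.

Lemma boxplusC f g : boxplus d m f g = boxplus d m g f.
Proof.
apply: eq_bigr => k _; congr (_ *: _); congr (_ * _); exact: boxplus_coefC.
Qed.

Lemma boxplusDl f1 f2 g : boxplus d m (f1 + f2) g = boxplus d m f1 g + boxplus d m f2 g.
Proof.
rewrite /boxplus -big_split; apply: eq_bigr => k _ /=.
rewrite -scalerDl -mulrDr -big_split /=; congr (_ * _ *: _).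
by apply: eq_bigr => i _; rewrite /scoef coefD; ring.
Qed.

Lemma boxplus0l g : boxplus d m 0 g = 0.
Proof.
rewrite /boxplus big1 // => k _; rewrite big1 ?mulr0 ?scale0r // => i _.
by rewrite /scoef coef0 !(mulr0, mul0r).
Qed.

Lemma boxplusZl a f g : boxplus d m (a *: f) g = a *: boxplus d m f g.
Proof.
rewrite /boxplus scaler_sumr; apply: eq_bigr => k _; rewrite scalerA mulrCA.
by congr (_ * _ *: _); rewrite mulr_sumr; apply: eq_bigr => i _; rewrite /scoef coefZ; ring.
Qed.

Hypothesis le_dm : (d <= m)%N.

Lemma scoef_Dxy_univ0 h : scoef d (Dxy_univ h) 0 = 0.
Proof. by rewrite /scoef subn0 coef_poly ltnn mulr0. Qed.

Lemma scoef_Dxy_univS h i : (i < d)%N ->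
  scoef d (Dxy_univ h) i.+1 = - ((d - i) * (m - i))%:R * scoef d h i.
Proof.
move=> lt_id; rewrite /scoef coef_poly ifT; last lia.
have -> : (d - i.+1).+1 = (d - i)%N by lia.
have -> : (d - i + (m - d))%N = (m - i)%N by lia.
by rewrite exprS; ring.
Qed.

Lemma bweight_shift i k : (i <= k)%N -> (k < d)%N ->
  bweight R d m i.+1 (k - i) k.+1 * ((d - i) * (m - i))%:R =
  bweight R d m i (k - i) k * ((d - k) * (m - k))%:R.
Proof.
move=> le_ik lt_kd; rewrite /bweight.
have -> : (d - i = (d - i.+1).+1)%N by lia.
have -> : (m - i = (m - i.+1).+1)%N by lia.
have -> : (d - k = (d - k.+1).+1)%N by lia.
have -> : (m - k = (m - k.+1).+1)%N by lia.
have fact_neq0 n : n`!%:R != 0 :> R by rewrite pnatr_eq0 -lt0n fact_gt0.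
rewrite !factS !natrM; field.
by rewrite !fact_neq0 !nat1r !pnatr_eq0.
Qed.

Lemma boxplus_coef_Dxy_univl f g k : (k < d)%N ->
  boxplus_coef (Dxy_univ f) g k.+1 = - ((d - k) * (m - k))%:R * boxplus_coef f g k.
Proof.
move=> lt_kd; rewrite /boxplus_coef big_ord_recl /= scoef_Dxy_univ0 mulr0 mul0r add0r.
rewrite mulr_sumr; apply: eq_bigr => i _; rewrite /bump /= add1n subSS.
have le_ik : (i <= k)%N by rewrite -ltnS.
rewrite scoef_Dxy_univS; last lia.
transitivity (- (bweight R d m i.+1 (k - i) k.+1 * ((d - i) * (m - i))%:R)
   * scoef d f i * scoef d g (k - i)); first ring.
by rewrite bweight_shift //; ring.
Qed.

Lemma Dxy_univ_boxplusl f g : Dxy_univ (boxplus d m f g) = boxplus d m (Dxy_univ f) g.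
Proof.
apply/polyP => n; rewrite coef_poly !coef_boxplus.
case: (ltnP n d) => [lt_nd|le_dn].
  have -> : (d - n = (d - n.+1).+1)%N by lia.
  rewrite (ltnW lt_nd) boxplus_coef_Dxy_univl; last lia.
  have -> : (d - (d - n.+1))%N = n.+1 by lia.
  have -> : (m - (d - n.+1))%N = (n.+1 + (m - d))%N by lia.
  by rewrite exprS; ring.
case: (leqP n d) => // le_nd.
have -> : (d - n = 0)%N by lia.
by rewrite /boxplus_coef big_ord1 /= scoef_Dxy_univ0 !(mulr0, mul0r).
Qed.

Lemma Lop_univ_boxplusl c f g : boxplus d m (Lop_univ c f) g = Lop_univ c (boxplus d m f g).
Proof.
have iter_Dxy_univ_boxplusl i :
    iter i Dxy_univ (boxplus d m f g) = boxplus d m (iter i Dxy_univ f) g.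
  by elim: i => //= i ->; rewrite Dxy_univ_boxplusl.
rewrite /Lop_univ (big_morph (boxplus d m ^~ g) (fun f1 f2 => boxplusDl f1 f2 g) (boxplus0l g)).
by apply: eq_bigr => i _; rewrite boxplusZl iter_Dxy_univ_boxplusl.
Qed.

Lemma Lop_univ_boxplusr c f g : boxplus d m f (Lop_univ c g) = Lop_univ c (boxplus d m f g).
Proof. by rewrite boxplusC Lop_univ_boxplusl boxplusC. Qed.

End BoxplusDerivative.

Theorem mainTheorem14 (R : numFieldType) (d m : nat) (c : seq R) (f g : {poly R}) :
  (1 <= d)%N -> (d <= m)%N ->
  (size f <= d.+1)%N -> (size g <= d.+1)%N ->
  let p := embed d m f in
  let q := embed d m g in
  Lop c (boxplus2 d m p q) = boxplus2 d m (Lop c p) q /\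
  boxplus2 d m (Lop c p) q = boxplus2 d m p (Lop c q).
Proof.
(* [embed] only reads the coefficients of degree <= d, so d >= 1 and the degree
   bounds on f and g are not needed. *)
move=> _ le_dm _ _ p q.
rewrite /p /q boxplus2_embed !Lop_embed !boxplus2_embed.
by rewrite (Lop_univ_boxplusl le_dm) (Lop_univ_boxplusr le_dm).
Qed.
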